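(* Let $\chi:\mathcal H\to\mathcal H_L^\chi\otimes\mathcal H_R^\chi$ be a splitting map. The set $\mathrm{cons}(\chi)$ of $\chi$-consistent operators is a Von Neumann algebra included in $\mathcal L(\mathcal H_L^\chi)$, and it is the largest Von Neumann algebra $\mathcal A\subseteq\mathcal L(\mathcal H_L^\chi)$ such that the restriction of $\sigma^\chi$ to $\mathcal A$ is a $*$-algebra homomorphism, where $\sigma^\chi:\mathcal L(\mathcal H_L^\chi)\to\mathcal L(\mathcal H)$, $\sigma^\chi(B)=\chi^\dagger(B\otimes\mathbb 1_{\mathcal H_R^\chi})\chi$.
   Context: All Hilbert spaces are finite-dimensional and complex. A Von Neumann algebra on a Hilbert space $\mathcal K$ is a $*$-subalgebra of $\mathcal L(\mathcal K)$ closed under adjoint and containing $\mathbb 1_{\mathcal K}$. A splitting map on $\mathcal H$ is an isometry $\chi:\mathcal H\to\mathcal H_L^\chi\otimes\mathcal H_R^\chi$; $\pi^\chi=\chi\chi^\dagger$. $B\in\mathcal L(\mathcal H_L^\chi)$ is $\chi$-consistent if $\pi^\chi(B\otimes\mathbb 1)=(B\otimes\mathbb 1)\pi^\chi$. *)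

From mathcomp Require Import all_boot all_order all_algebra.
From mathcomp Require Export mxtens.
Set Implicit Arguments. Unset Strict Implicit. Unset Printing Implicit Defensive.
Import GRing.Theory Num.Theory.
Local Open Scope ring_scope.

(* Finite-dimensional complex Hilbert spaces are modelled as C^n with the
   standard inner product, C a numClosedFieldType (e.g. complex numbers);
   operators are square matrices, maps H -> K are 'M_(dim K, dim H).
   H_L (x) H_R is C^(l*r) with the Kronecker product tensmx (from mxtens). *)

Definition adjmx (C : numClosedFieldType) m n (A : 'M[C]_(m, n)) : 'M[C]_(n, m) :=
  (map_mx Num.conj A)^T.

Definition is_isometry (C : numClosedFieldType) n k (chi : 'M[C]_(k, n)) : Prop :=
  adjmx chi *m chi = 1%:M.

Definition pi_chi (C : numClosedFieldType) n l r (chi : 'M[C]_(l * r, n))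
  : 'M[C]_(l * r) := chi *m adjmx chi.

Definition consistent (C : numClosedFieldType) n l r (chi : 'M[C]_(l * r, n))
  (B : 'M[C]_l) : Prop :=
  pi_chi chi *m (B *t (1%:M : 'M[C]_r)) = (B *t (1%:M : 'M[C]_r)) *m pi_chi chi.

Definition cons_set (C : numClosedFieldType) n l r (chi : 'M[C]_(l * r, n))
  : 'M[C]_l -> Prop := fun B => consistent chi B.

Definition sigma_chi (C : numClosedFieldType) n l r (chi : 'M[C]_(l * r, n))
  (B : 'M[C]_l) : 'M[C]_n :=
  adjmx chi *m (B *t (1%:M : 'M[C]_r)) *m chi.

(* (finite-dimensional) Von Neumann algebra on C^k: a *-subalgebra of L(C^k)
   containing the identity. *)
Definition vN_algebra (C : numClosedFieldType) k (A : 'M[C]_k -> Prop) : Prop :=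
  [/\ A 1%:M,
      (forall (a : C) B, A B -> A (a *: B)),
      (forall B D, A B -> A D -> A (B + D)),
      (forall B D, A B -> A D -> A (B *m D)) &
      (forall B, A B -> A (adjmx B))].

Definition star_hom_on (C : numClosedFieldType) k n (A : 'M[C]_k -> Prop)
  (f : 'M[C]_k -> 'M[C]_n) : Prop :=
  [/\ (forall (a : C) B D, A B -> A D -> f (a *: B + D) = a *: f B + f D),
      (forall B D, A B -> A D -> f (B *m D) = f B *m f D),
      f 1%:M = 1%:M &
      (forall B, A B -> f (adjmx B) = adjmx (f B))].

(* For an isometry [V], the compression [T |-> V^† T V] satisfies
   [V^† (T^† T) V = (V^† T^† V)(V^† T V)] exactly when [T] maps the range of
   [V] into itself: the defect [N = T V - V V^† T V] has
   [N^† N = V^† T^† T V - (V^† T^† V)(V^† T V)], and [N^† N = 0] forces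
   [N = 0].  An operator commutes with the range projection [V V^†] iff it
   and its adjoint both leave the range invariant.  With [V = chi] and
   [T = B ⊗ 1], consistency of [B] is this commutation; so [sigma^chi] is
   multiplicative on [cons(chi)], and conversely multiplicativity of
   [sigma^chi] on [B^† B] and [B B^†] makes [B] consistent. *)

From mathcomp Require Import all_boot all_order all_algebra.

Set Implicit Arguments.
Unset Strict Implicit.
Unset Printing Implicit Defensive.

Import GRing.Theory Num.Theory.
Local Open Scope ring_scope.

Section Adjoint.
Variable C : numClosedFieldType.

Lemma adjmxM m n p (A : 'M[C]_(m, n)) (B : 'M[C]_(n, p)) :
  adjmx (A *m B) = adjmx B *m adjmx A.
Proof. by rewrite /adjmx map_mxM trmx_mul. Qed.

Lemma adjmxK m n (A : 'M[C]_(m, n)) : adjmx (adjmx A) = A.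
Proof. by apply/matrixP => i j; rewrite !mxE conjCK. Qed.

Lemma adjmxB m n (A B : 'M[C]_(m, n)) : adjmx (A - B) = adjmx A - adjmx B.
Proof. by apply/matrixP => i j; rewrite !mxE rmorphB. Qed.

Lemma adjmx_tens m n p q (A : 'M[C]_(m, n)) (B : 'M[C]_(p, q)) :
  adjmx (A *t B) = adjmx A *t adjmx B.
Proof. by rewrite /adjmx map_mxT trmx_tens. Qed.

Lemma adjmx1 n : adjmx (1%:M : 'M[C]_n) = 1%:M.
Proof. by rewrite /adjmx map_mx1 trmx1. Qed.

(* The diagonal entries of [M^† M] are the squared norms of the columns of [M]. *)
Lemma adjmx_mul_eq0 m n (M : 'M[C]_(m, n)) : adjmx M *m M = 0 -> M = 0.
Proof.
move=> MM0; apply/matrixP => i j.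
have /eqP := congr1 (fun X : 'M[C]_n => X j j) MM0; rewrite !mxE.
have ge0 (k : 'I_m) : 0 <= adjmx M j k * M k j.
  by rewrite !mxE mulrC mul_conjC_ge0.
move/eqP/(psumr_eq0P (fun k _ => ge0 k))/(_ i isT).
by rewrite !mxE mulrC => /eqP; rewrite mul_conjC_eq0 => /eqP.
Qed.

End Adjoint.

Section Ampliation.
Variables (R : comPzRingType) (l r : nat).

Definition amplmx (B : 'M[R]_l) : 'M[R]_(l * r) := B *t (1%:M : 'M[R]_r).

Lemma amplmx1 : amplmx 1%:M = 1%:M.
Proof.
apply/matrixP => i j.
case: (mxtens_indexP i) => i0 i1; case: (mxtens_indexP j) => j0 j1.
rewrite tensmxE !mxE (can_eq (@mxtens_indexK _ _)) xpair_eqE.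
by case: (i0 == j0); case: (i1 == j1); rewrite /= ?mulr1 ?mulr0 ?mul0r.
Qed.

Lemma amplmxM (B D : 'M[R]_l) : amplmx (B *m D) = amplmx B *m amplmx D.
Proof. by rewrite /amplmx tensmx_mul mulmx1. Qed.

Lemma amplmxZ (a : R) (B : 'M[R]_l) : amplmx (a *: B) = a *: amplmx B.
Proof. by apply/matrixP => i j; rewrite !mxE mulrA. Qed.

Lemma amplmxD (B D : 'M[R]_l) : amplmx (B + D) = amplmx B + amplmx D.
Proof. by apply/matrixP => i j; rewrite !mxE mulrDl. Qed.

End Ampliation.

Lemma amplmx_adj (C : numClosedFieldType) l r (B : 'M[C]_l) :
  amplmx r (adjmx B) = adjmx (amplmx r B).
Proof. by rewrite /amplmx adjmx_tens adjmx1. Qed.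

Section Compression.
Variables (C : numClosedFieldType) (k n : nat) (V : 'M[C]_(k, n)).

Definition compress (T : 'M[C]_k) : 'M[C]_n := adjmx V *m T *m V.

Definition range_invariant (T : 'M[C]_k) : Prop := T *m V = V *m compress T.

Local Notation P := (V *m adjmx V).

Lemma compress_linear (a : C) (T S : 'M[C]_k) :
  compress (a *: T + S) = a *: compress T + compress S.
Proof. by rewrite /compress mulmxDr mulmxDl -scalemxAr -scalemxAl. Qed.

Lemma compress_adj (T : 'M[C]_k) : compress (adjmx T) = adjmx (compress T).
Proof. by rewrite /compress !adjmxM adjmxK mulmxA. Qed.

Lemma compressM_invariant (T S : 'M[C]_k) :
  range_invariant S -> compress (T *m S) = compress T *m compress S.
Proof.
rewrite /range_invariant /compress => invS.
by rewrite -mulmxA -(mulmxA T) invS !mulmxA.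
Qed.

Lemma commute_proj_adj (T : 'M[C]_k) :
  P *m T = T *m P -> P *m adjmx T = adjmx T *m P.
Proof.
have adjP : adjmx P = P by rewrite adjmxM adjmxK.
by move=> PT; rewrite -{1}adjP -adjmxM -PT adjmxM adjP.
Qed.

Hypothesis isoV : is_isometry V.

Lemma compress1 : compress 1%:M = 1%:M.
Proof. by rewrite /compress mulmx1. Qed.

Lemma isometry_mulmxK p (X : 'M[C]_(p, n)) : X *m adjmx V *m V = X.
Proof. by rewrite -mulmxA isoV mulmx1. Qed.

Lemma invariance_defect (T : 'M[C]_k) (N := T *m V - V *m compress T) :
  adjmx N *m N =
    compress (adjmx T *m T) - compress (adjmx T) *m compress T.
Proof.
rewrite /N /compress adjmxB !adjmxM adjmxK mulmxBl !mulmxBr !mulmxA.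
by rewrite isometry_mulmxK subrr subr0.
Qed.

Lemma invariant_compressM (T : 'M[C]_k) :
  compress (adjmx T *m T) = compress (adjmx T) *m compress T ->
  range_invariant T.
Proof.
move=> mulT; apply/eqP; rewrite -subr_eq0; apply/eqP/adjmx_mul_eq0.
by rewrite invariance_defect mulT subrr.
Qed.

Lemma commute_proj_invariant (T : 'M[C]_k) :
  P *m T = T *m P -> range_invariant T.
Proof.
rewrite /range_invariant /compress => PT.
by rewrite -{1}(isometry_mulmxK V) mulmxA -PT !mulmxA.
Qed.

Lemma invariant_commute_proj (T : 'M[C]_k) :
  range_invariant T -> range_invariant (adjmx T) -> P *m T = T *m P.
Proof.
have range_invariant_proj S : range_invariant S -> S *m P = P *m S *m P.
  by move=> invS; rewrite /compress !mulmxA invS !mulmxA.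
move=> /range_invariant_proj TP /range_invariant_proj /(congr1 (@adjmx _ _ _)).
by rewrite !adjmxM !adjmxK mulmxA -TP.
Qed.

End Compression.

Section Consistency.
Variables (C : numClosedFieldType) (n l r : nat) (chi : 'M[C]_(l * r, n)).

Local Notation P := (chi *m adjmx chi).

Lemma consistentE (B : 'M[C]_l) :
  consistent chi B = (P *m amplmx r B = amplmx r B *m P).
Proof. by []. Qed.

Lemma sigma_chiE (B : 'M[C]_l) : sigma_chi chi B = compress chi (amplmx r B).
Proof. by []. Qed.

Lemma sigma_chi_linear (a : C) (B D : 'M[C]_l) :
  sigma_chi chi (a *: B + D) = a *: sigma_chi chi B + sigma_chi chi D.
Proof. by rewrite !sigma_chiE amplmxD amplmxZ compress_linear. Qed.

Lemma sigma_chi_adj (B : 'M[C]_l) :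
  sigma_chi chi (adjmx B) = adjmx (sigma_chi chi B).
Proof. by rewrite !sigma_chiE amplmx_adj compress_adj. Qed.

Hypothesis iso_chi : is_isometry chi.

Lemma sigma_chi1 : sigma_chi chi 1%:M = 1%:M.
Proof. by rewrite sigma_chiE amplmx1 compress1. Qed.

Lemma cons_vN_algebra : vN_algebra (cons_set chi).
Proof.
rewrite /cons_set; split=> [|a B|B D|B D|B]; rewrite ?consistentE.
- by rewrite amplmx1 mulmx1 mul1mx.
- by rewrite amplmxZ -scalemxAr => ->; rewrite scalemxAl.
- by rewrite amplmxD mulmxDr mulmxDl => -> ->.
- by rewrite amplmxM => PB PD; rewrite mulmxA PB -[LHS]mulmxA PD mulmxA.
- by rewrite amplmx_adj; apply: commute_proj_adj.
Qed.

Lemma cons_sigma_chi_star_hom : star_hom_on (cons_set chi) (sigma_chi chi).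
Proof.
split=> [a B D _ _|B D _ consD||B _];
  rewrite ?sigma_chi_linear ?sigma_chi1 ?sigma_chi_adj //.
rewrite !sigma_chiE amplmxM compressM_invariant //.
exact: commute_proj_invariant.
Qed.

Lemma cons_maximal (A : 'M[C]_l -> Prop) :
  vN_algebra A -> star_hom_on A (sigma_chi chi) ->
  forall B, A B -> cons_set chi B.
Proof.
move=> [_ _ _ _ A_adj] [_ sigmaM _ _] B AB.
have compress_amplM (X Y : 'M[C]_l) :
    A X -> A Y -> compress chi (amplmx r X *m amplmx r Y) =
      compress chi (amplmx r X) *m compress chi (amplmx r Y).
  by move=> AX AY; rewrite -amplmxM; exact: sigmaM.
rewrite /cons_set consistentE; apply: invariant_commute_proj => //.
  apply: invariant_compressM => //; rewrite -amplmx_adj.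
  exact: compress_amplM (A_adj _ AB) AB.
apply: invariant_compressM => //; rewrite adjmxK -amplmx_adj.
exact: compress_amplM AB (A_adj _ AB).
Qed.

End Consistency.

Theorem mainTheorem7 (C : numClosedFieldType) (n l r : nat)
  (chi : 'M[C]_(l * r, n)) (Hchi : is_isometry chi) :
  [/\ vN_algebra (cons_set chi),
      star_hom_on (cons_set chi) (sigma_chi chi) &
      forall A : 'M[C]_l -> Prop,
        vN_algebra A -> star_hom_on A (sigma_chi chi) ->
        forall B, A B -> cons_set chi B].
Proof.
split; [exact: cons_vN_algebra | exact: cons_sigma_chi_star_hom |].
exact: cons_maximal.
Qed.
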